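(* For an integer $n \geq 3$, let $W_n$ be the wheel graph of order $n+1$. Then $$\phi_{\mathbb{C}}(W_n) = \begin{cases} 2 & \text{if } n \text{ is even},\\ 1 + 2\sin\left(\frac{\pi}{6}\cdot\frac{n}{n-1}\right) & \text{if } n \equiv 1 \text{ or } 3 \pmod 6,\\ 1 + 2\sin\left(\frac{\pi}{6}\cdot\frac{n+1}{n}\right) & \text{if } n \equiv 5 \pmod 6.\end{cases}$$
   Context: The wheel graph $W_n$ ($n\ge 3$) consists of a cycle $v_0v_1\cdots v_{n-1}v_0$ of length $n$ together with one further vertex $u$ adjacent to every $v_j$. For a real number $r \geq 2$, a complex nowhere-zero $r$-flow on a graph $G$ is an orientation of $G$ together with a map $\varphi\colon E(G)\to\mathbb{C}$ such that $1 \le |\varphi(e)| \le r-1$ for every edge $e$ and, at every vertex, the sum of the values on incoming edges equals the sum of the values on outgoing edges. For a bridgeless graph $G$, the complex flow number $\phi_{\mathbb{C}}(G)$ is the minimum (equivalently infimum; it is attained) of the real numbers $r\ge 2$ such that $G$ admits a complex nowhere-zero $r$-flow. *)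

From Stdlib Require Import Reals List Arith.
From Coquelicot Require Import Coquelicot.
Import ListNotations.
Open Scope R_scope.

(* A finite (multi)graph: vertices 0 .. nv-1, and a list of edges given by
   their two endpoints; edge number i is the i-th element of the list. *)
Record graph := Graph { nv : nat; edges : list (nat * nat) }.

(* An orientation assigns to each edge index a boolean: [false] means the
   edge (a,b) is oriented a -> b, [true] means b -> a. *)
Definition tail (G : graph) (o : nat -> bool) (i : nat) : nat :=
  let e := nth i (edges G) (0%nat, 0%nat) in if o i then snd e else fst e.
Definition head (G : graph) (o : nat -> bool) (i : nat) : nat :=
  let e := nth i (edges G) (0%nat, 0%nat) in if o i then fst e else snd e.

Definition inflow (G : graph) (o : nat -> bool) (phi : nat -> C) (x : nat) : C :=
  fold_right Cplus 0%C
    (map (fun i => if Nat.eqb (head G o i) x then phi i else 0%C)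
         (seq 0 (length (edges G)))).
Definition outflow (G : graph) (o : nat -> bool) (phi : nat -> C) (x : nat) : C :=
  fold_right Cplus 0%C
    (map (fun i => if Nat.eqb (tail G o i) x then phi i else 0%C)
         (seq 0 (length (edges G)))).

Definition is_complex_nz_flow (G : graph) (r : R) (o : nat -> bool) (phi : nat -> C) : Prop :=
  (forall i, (i < length (edges G))%nat -> 1 <= Cmod (phi i) <= r - 1) /\
  (forall x, (x < nv G)%nat -> inflow G o phi x = outflow G o phi x).

Definition has_complex_nz_flow (G : graph) (r : R) : Prop :=
  exists (o : nat -> bool) (phi : nat -> C), is_complex_nz_flow G r o phi.

Definition is_complex_flow_number (G : graph) (p : R) : Prop :=
  2 <= p /\ has_complex_nz_flow G p /\
  (forall r, 2 <= r -> has_complex_nz_flow G r -> p <= r).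

(* Wheel W_n: rim vertices v_j = j (0 <= j < n), hub u = n.
   Edges: spokes u v_j, then rim edges v_j v_{j+1 mod n}. *)
Definition wheel (n : nat) : graph :=
  Graph (S n)
    (map (fun j => (n, j)) (seq 0 n) ++ map (fun j => (j, Nat.modulo (S j) n)) (seq 0 n)).

(* A nowhere-zero flow on W_n is a cyclic sequence of points z_0, ..., z_(n-1) of the
   plane (the rim values) with 1 <= |z_j| <= r - 1 and 1 <= |z_j - z_(j-1)| <= r - 1
   (the spoke values).  The upper bounds are explicit cycles: for even n the points
   alternate between 1 and e^(i PI/3); for odd n they turn by a constant angle 2 t,
   t = PI/6 + delta, and the cycle is closed by a step of length 1 (n = 1 mod 6) or
   2 sin t (n = 5 mod 6), or through one point of modulus 2 sin t (n = 3 mod 6).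

   For the lower bound write |z_j| = 2 sin (PI/6 + e_j) and r - 1 = 2 sin (PI/6 + U).
   The turning angle th_j from z_(j-1) to z_j then satisfies
   PI/3 - (e_(j-1) + e_j) <= |th_j| <= PI/3 + 2 U - (e_(j-1) + e_j), and the th_j sum
   to a multiple of 2 PI.  For odd n and U < delta a sign change among the th_j costs
   too much, so sum |th_j| = 2 PI K with |6 K - n| PI/3 <= 2 U n < 2 delta n.  For the
   chosen delta this leaves only n = 1 mod 6 with 6 K = n - 1, which a sharper estimate
   excludes: there every |th_j| exceeds (n - 1) PI/(3 n). *)

From Pilot Require Import Defs.
From Stdlib Require Import Reals Lra Lia List Nsatz.
From Coquelicot Require Import Coquelicot.
Open Scope R_scope.

(** * Finite sums *)

Definition rsum (f : nat -> R) (l : list nat) : R := fold_right Rplus 0 (map f l).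
Definition csum (f : nat -> C) (l : list nat) : C := fold_right Cplus 0%C (map f l).

Lemma rsum_ext f g l : (forall i, In i l -> f i = g i) -> rsum f l = rsum g l.
Proof.
  unfold rsum; induction l as [|a l IH]; intros H; simpl; [reflexivity|].
  f_equal; [apply H | apply IH; intros; apply H]; simpl; auto.
Qed.

Lemma rsum_app f l1 l2 : rsum f (l1 ++ l2) = rsum f l1 + rsum f l2.
Proof. unfold rsum; induction l1 as [|a l IH]; simpl; [|rewrite IH]; ring. Qed.

Lemma rsum_map f h l : rsum f (map h l) = rsum (fun i => f (h i)) l.
Proof. unfold rsum. rewrite map_map. reflexivity. Qed.

Lemma rsum_plus f g l : rsum (fun i => f i + g i) l = rsum f l + rsum g l.
Proof. unfold rsum; induction l as [|a l IH]; simpl; [|rewrite IH]; ring. Qed.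

Lemma rsum_minus f g l : rsum (fun i => f i - g i) l = rsum f l - rsum g l.
Proof. unfold rsum; induction l as [|a l IH]; simpl; [|rewrite IH]; ring. Qed.

Lemma rsum_opp f l : rsum (fun i => - f i) l = - rsum f l.
Proof. unfold rsum; induction l as [|a l IH]; simpl; [|rewrite IH]; ring. Qed.

Lemma rsum_scal c f l : rsum (fun i => c * f i) l = c * rsum f l.
Proof. unfold rsum; induction l as [|a l IH]; simpl; [|rewrite IH]; ring. Qed.

Lemma rsum_const c l : rsum (fun _ => c) l = INR (length l) * c.
Proof.
  unfold rsum; induction l as [|a l IH]; simpl length; [simpl; ring|].
  rewrite S_INR. simpl. rewrite IH. ring.
Qed.

Lemma rsum_le f g l : (forall i, In i l -> f i <= g i) -> rsum f l <= rsum g l.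
Proof.
  unfold rsum; induction l as [|a l IH]; intros H; simpl; [lra|].
  apply Rplus_le_compat; [apply H; simpl; auto|apply IH; intros; apply H; simpl; auto].
Qed.

Lemma rsum_lt f g l : l <> nil -> (forall i, In i l -> f i < g i) -> rsum f l < rsum g l.
Proof.
  intros Hl H. destruct l as [|a l]; [congruence|].
  change (f a + rsum f l < g a + rsum g l).
  apply Rplus_lt_le_compat; [apply H; simpl; auto|].
  apply rsum_le. intros i Hi. apply Rlt_le, H. simpl; auto.
Qed.

Lemma rsum_abs f l : Rabs (rsum f l) <= rsum (fun i => Rabs (f i)) l.
Proof.
  unfold rsum; induction l as [|a l IH]; simpl; [rewrite Rabs_R0; lra|].
  eapply Rle_trans; [apply Rabs_triang|lra].
Qed.

Lemma rsum_seq_split f n j : (j < n)%nat ->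
  rsum f (seq 0 n) = rsum f (seq 0 j) + f j + rsum f (seq (S j) (n - S j)).
Proof.
  intros Hj. replace n with (j + S (n - S j))%nat at 1 by lia.
  rewrite seq_app, rsum_app. simpl (seq (0 + j) _).
  change (rsum f (j :: seq (S j) (n - S j))) with (f j + rsum f (seq (S j) (n - S j))). ring.
Qed.

Lemma rsum_abs_ge_of_sum0 f n j : (j < n)%nat -> rsum f (seq 0 n) = 0 ->
  2 * Rabs (f j) <= rsum (fun i => Rabs (f i)) (seq 0 n).
Proof.
  intros Hj H0. rewrite (rsum_seq_split f n j Hj) in H0.
  rewrite (rsum_seq_split _ n j Hj).
  pose proof (rsum_abs f (seq 0 j)). pose proof (rsum_abs f (seq (S j) (n - S j))).
  pose proof (Rabs_triang (rsum f (seq 0 j)) (rsum f (seq (S j) (n - S j)))).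
  replace (rsum f (seq 0 j) + rsum f (seq (S j) (n - S j))) with (- f j) in * by lra.
  rewrite Rabs_Ropp in *. lra.
Qed.

Lemma csum_ext f g l : (forall i, In i l -> f i = g i) -> csum f l = csum g l.
Proof.
  unfold csum; induction l as [|a l IH]; intros H; simpl; [reflexivity|].
  f_equal; [apply H | apply IH; intros; apply H]; simpl; auto.
Qed.

Lemma csum_app f l1 l2 : csum f (l1 ++ l2) = (csum f l1 + csum f l2)%C.
Proof. unfold csum; induction l1 as [|a l IH]; simpl; [|rewrite IH]; ring. Qed.

Lemma csum_map f h l : csum f (map h l) = csum (fun i => f (h i)) l.
Proof. unfold csum. rewrite map_map. reflexivity. Qed.

Lemma csum_minus f g l : csum (fun i => f i - g i)%C l = (csum f l - csum g l)%C.
Proof. unfold csum; induction l as [|a l IH]; simpl; [|rewrite IH]; ring. Qed.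

Lemma csum_opp f l : csum (fun i => - f i)%C l = (- csum f l)%C.
Proof. unfold csum; induction l as [|a l IH]; simpl; [|rewrite IH]; ring. Qed.

Lemma csum_zero l : csum (fun _ => 0%C) l = 0%C.
Proof. unfold csum; induction l as [|a l IH]; simpl; [|rewrite IH]; ring. Qed.

Lemma csum_delta (c : C) k n : (k < n)%nat ->
  csum (fun i => if Nat.eqb i k then c else 0%C) (seq 0 n) = c.
Proof.
  intros Hk. replace n with (k + S (n - S k))%nat by lia.
  rewrite seq_app, csum_app. simpl (seq (0 + k) _).
  change (csum ?g (k :: ?l)) with (g k + csum g l)%C. cbv beta. rewrite Nat.eqb_refl.
  rewrite (csum_ext _ (fun _ => 0%C) (seq 0 k)), (csum_ext _ (fun _ => 0%C) (seq (S k) _)),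
    !csum_zero; [ring| |];
    intros i Hi; apply in_seq in Hi; destruct (Nat.eqb_spec i k); [lia|reflexivity|lia|reflexivity].
Qed.

(** * Flows on wheels as cycles of points *)

Definition rim_pred (n j : nat) : nat := match j with O => (n - 1)%nat | S k => k end.

Lemma rim_pred_lt n j : (j < n)%nat -> (rim_pred n j < n)%nat.
Proof. destruct j; simpl; lia. Qed.

Lemma succ_mod_eq_iff n i j : (2 <= n)%nat -> (i < n)%nat -> (j < n)%nat ->
  Nat.modulo (S i) n = j <-> i = rim_pred n j.
Proof.
  intros Hn Hi Hj. destruct (Nat.eq_dec (S i) n) as [E|E].
  - rewrite E, Nat.Div0.mod_same. destruct j; simpl; lia.
  - rewrite Nat.mod_small by lia. destruct j; simpl; lia.
Qed.

Lemma map_rim_pred_seq n : (1 <= n)%nat ->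
  map (rim_pred n) (seq 0 n) = (n - 1)%nat :: seq 0 (n - 1).
Proof.
  intros Hn. destruct n as [|m]; [lia|]. simpl. rewrite <- seq_shift, map_map.
  rewrite Nat.sub_0_r. f_equal. apply map_id.
Qed.

Lemma seq_last n : (1 <= n)%nat -> seq 0 n = seq 0 (n - 1) ++ (n - 1)%nat :: nil.
Proof. intros Hn. replace n with (S (n - 1)) at 1 by lia. apply seq_S. Qed.

Lemma rsum_rim_pred n f : (1 <= n)%nat ->
  rsum (fun j => f (rim_pred n j)) (seq 0 n) = rsum f (seq 0 n).
Proof.
  intros Hn. rewrite <- rsum_map, map_rim_pred_seq, (seq_last n), rsum_app by exact Hn.
  unfold rsum; simpl; ring.
Qed.

Lemma csum_rim_pred n f : (1 <= n)%nat ->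
  csum (fun j => f (rim_pred n j)) (seq 0 n) = csum f (seq 0 n).
Proof.
  intros Hn. rewrite <- csum_map, map_rim_pred_seq, (seq_last n), csum_app by exact Hn.
  unfold csum; simpl; ring.
Qed.

Definition along (o : nat -> bool) (phi : nat -> C) (i : nat) : C :=
  if o i then (- phi i)%C else phi i.

Lemma Cmod_along o phi i : Cmod (along o phi i) = Cmod (phi i).
Proof. unfold along. destruct (o i); [apply Cmod_opp|reflexivity]. Qed.

Lemma net_inflow G o phi x :
  (inflow G o phi x - outflow G o phi x)%C =
  csum (fun i => let e := nth i (edges G) (0%nat, 0%nat) in
          (if Nat.eqb (snd e) x then along o phi i else 0)
          - (if Nat.eqb (fst e) x then along o phi i else 0))%C
       (seq 0 (length (edges G))).
Proof.
  unfold inflow, outflow. change (fold_right Cplus 0%C (map ?f ?l)) with (csum f l).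
  rewrite <- csum_minus. apply csum_ext. intros i _.
  unfold Defs.head, Defs.tail, along. destruct (o i), (Nat.eqb _ x), (Nat.eqb _ x); simpl; ring.
Qed.

Lemma wheel_edges_length n : length (edges (wheel n)) = (2 * n)%nat.
Proof. simpl. rewrite length_app, !length_map, length_seq. lia. Qed.

Lemma seq_add_shift k s m : seq (k + s) m = map (Nat.add k) (seq s m).
Proof.
  revert s. induction m as [|m IH]; intros s; [reflexivity|].
  simpl. rewrite <- IH. f_equal. f_equal. lia.
Qed.

Lemma wheel_seq_edges n :
  seq 0 (length (edges (wheel n))) = seq 0 n ++ map (Nat.add n) (seq 0 n).
Proof.
  rewrite wheel_edges_length, <- seq_add_shift, Nat.add_0_r.
  replace (2 * n)%nat with (n + n)%nat by lia. apply seq_app.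
Qed.

Lemma wheel_spoke n i : (i < n)%nat -> nth i (edges (wheel n)) (0%nat, 0%nat) = (n, i).
Proof.
  intros H. simpl. rewrite app_nth1 by (rewrite length_map, length_seq; exact H).
  rewrite nth_indep with (d' := (n, 0%nat)) by (rewrite length_map, length_seq; exact H).
  rewrite map_nth, seq_nth by exact H. reflexivity.
Qed.

Lemma wheel_rim n i : (i < n)%nat ->
  nth (n + i) (edges (wheel n)) (0%nat, 0%nat) = (i, Nat.modulo (S i) n).
Proof.
  intros H. simpl. rewrite app_nth2 by (rewrite length_map, length_seq; lia).
  rewrite length_map, length_seq, Nat.add_comm, Nat.add_sub.
  rewrite nth_indep with (d' := (fun j => (j, Nat.modulo (S j) n)) 0%nat)
    by (rewrite length_map, length_seq; exact H).
  rewrite (map_nth (fun j => (j, Nat.modulo (S j) n)) (seq 0 n) 0%nat), seq_nth by exact H.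
  reflexivity.
Qed.

Lemma wheel_rim_balance n o phi j : (2 <= n)%nat -> (j < n)%nat ->
  (inflow (wheel n) o phi j - outflow (wheel n) o phi j)%C =
  (along o phi j + along o phi (n + rim_pred n j) - along o phi (n + j))%C.
Proof.
  intros Hn Hj. rewrite net_inflow, wheel_seq_edges, csum_app, csum_map.
  match goal with |- (csum ?spokes _ + csum ?rim _)%C = _ =>
    rewrite (csum_ext spokes (fun i => if Nat.eqb i j then along o phi j else 0%C)),
      (csum_ext rim (fun i =>
         (if Nat.eqb i (rim_pred n j) then along o phi (n + rim_pred n j) else 0)
         - (if Nat.eqb i j then along o phi (n + j) else 0))%C) end.
  2:{ intros i Hi. apply in_seq in Hi. rewrite wheel_rim by lia. simpl.
      replace (Nat.eqb (Nat.modulo (S i) n) j) with (Nat.eqb i (rim_pred n j)).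
      2:{ apply Bool.eq_iff_eq_true. rewrite !Nat.eqb_eq.
          symmetry. apply succ_mod_eq_iff; lia. }
      destruct (Nat.eqb_spec i j) as [->|].
      - destruct (Nat.eqb_spec j (rim_pred n j)) as [E|]; [rewrite <- E|]; reflexivity.
      - destruct (Nat.eqb_spec i (rim_pred n j)) as [->|]; reflexivity. }
  2:{ intros i Hi. apply in_seq in Hi. rewrite wheel_spoke by lia. simpl.
      destruct (Nat.eqb_spec n j); [lia|]. destruct (Nat.eqb_spec i j); [subst|]; ring. }
  rewrite csum_minus, !csum_delta by (auto using rim_pred_lt). ring.
Qed.

Lemma wheel_hub_balance n o phi :
  (inflow (wheel n) o phi n - outflow (wheel n) o phi n)%C =
  (- csum (along o phi) (seq 0 n))%C.
Proof.
  rewrite net_inflow, wheel_seq_edges, csum_app, csum_map.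
  match goal with |- (csum ?spokes _ + csum ?rim _)%C = _ =>
    rewrite (csum_ext spokes (fun i => - along o phi i)%C), (csum_ext rim (fun _ => 0%C)) end.
  2:{ intros i Hi. apply in_seq in Hi. rewrite wheel_rim by lia. simpl.
      pose proof (Nat.mod_upper_bound (S i) n ltac:(lia)).
      destruct (Nat.eqb_spec (Nat.modulo (S i) n) n), (Nat.eqb_spec i n); [lia..|ring]. }
  2:{ intros i Hi. apply in_seq in Hi. rewrite wheel_spoke by lia. simpl.
      rewrite Nat.eqb_refl. destruct (Nat.eqb_spec i n); [lia|ring]. }
  rewrite csum_opp, csum_zero. ring.
Qed.

Definition admissible_cycle (n : nat) (M : R) (z : nat -> C) : Prop :=
  forall j, (j < n)%nat ->
    1 <= Cmod (z j) <= M /\ 1 <= Cmod (z j - z (rim_pred n j))%C <= M.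

Lemma Cminus_eq_0_iff (a b : C) : (a - b)%C = 0%C <-> a = b.
Proof.
  split; intros H; [|subst; ring].
  replace a with ((a - b) + b)%C by ring. rewrite H. ring.
Qed.

(* [z j] is the value on the rim edge from [v_j] to [v_(j+1)]: conservation at [v_j]
   says that the spoke into [v_j] carries [z j - z (rim_pred n j)], and conservation
   at the hub then holds automatically. *)
Lemma wheel_flow_iff n r : (2 <= n)%nat ->
  has_complex_nz_flow (wheel n) r <-> exists z, admissible_cycle n (r - 1) z.
Proof.
  intros Hn. split.
  - intros [o [phi [Hbound Hcons]]]. rewrite wheel_edges_length in Hbound.
    exists (fun j => along o phi (n + j)). intros j Hj.
    assert (Hspoke : along o phi j = (along o phi (n + j) - along o phi (n + rim_pred n j))%C).
    { pose proof (wheel_rim_balance n o phi j Hn Hj) as E.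
      rewrite (Hcons j) in E by (simpl; lia).
      apply (f_equal (fun w => w + along o phi (n + j) - along o phi (n + rim_pred n j))%C) in E.
      ring_simplify in E. rewrite E. ring. }
    rewrite <- Hspoke, !Cmod_along. split; apply Hbound; lia.
  - intros [z Hz].
    exists (fun _ => false),
      (fun i => if Nat.ltb i n then (z i - z (rim_pred n i))%C else z (i - n)%nat).
    split.
    + intros i Hi. rewrite wheel_edges_length in Hi.
      destruct (Nat.ltb_spec i n); [apply Hz; lia|].
      apply (Hz (i - n)%nat). lia.
    + intros x Hx. simpl in Hx. apply Cminus_eq_0_iff.
      destruct (Nat.eq_dec x n) as [->|Hxn].
      * rewrite wheel_hub_balance.
        rewrite (csum_ext _ (fun i => z i - z (rim_pred n i))%C).
        -- rewrite csum_minus, csum_rim_pred by lia. ring.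
        -- intros i Hi. apply in_seq in Hi. unfold along.
           destruct (Nat.ltb_spec i n); [reflexivity|lia].
      * rewrite wheel_rim_balance by lia. unfold along.
        pose proof (rim_pred_lt n x ltac:(lia)).
        destruct (Nat.ltb_spec x n), (Nat.ltb_spec (n + rim_pred n x) n), (Nat.ltb_spec (n + x) n);
          try lia.
        rewrite !Nat.add_comm with (n := n), !Nat.add_sub. ring.
Qed.

(** * Upper bounds *)

Definition cis (t : R) : C := (cos t, sin t).

Lemma cis_add a b : cis (a + b) = (cis a * cis b)%C.
Proof.
  unfold cis, Cmult. simpl. rewrite cos_plus, sin_plus. f_equal; ring.
Qed.

Lemma Cmod_sq (w : C) : Cmod w * Cmod w = fst w * fst w + snd w * snd w.
Proof.
  unfold Cmod. rewrite sqrt_sqrt; [ring|].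
  pose proof (Rle_0_sqr (fst w)). pose proof (Rle_0_sqr (snd w)). unfold Rsqr in *. nra.
Qed.

Lemma Cmod_polar (r a : R) : 0 <= r -> Cmod (r * cis a)%C = r.
Proof.
  intros Hr. rewrite Cmod_mult, Cmod_R, Rabs_pos_eq by exact Hr.
  unfold Cmod, cis. cbn [fst snd].
  replace (cos a ^ 2 + sin a ^ 2) with 1 by (rewrite <- (sin2_cos2 a); unfold Rsqr; ring).
  rewrite sqrt_1. ring.
Qed.

Lemma Cmod_polar_sub (r1 a1 r2 a2 : R) :
  Cmod (r1 * cis a1 - r2 * cis a2)%C =
  sqrt (r1 * r1 + r2 * r2 - 2 * r1 * r2 * cos (a1 - a2)).
Proof.
  unfold Cmod, cis. simpl. f_equal. rewrite cos_minus.
  pose proof (sin2_cos2 a1). pose proof (sin2_cos2 a2). unfold Rsqr in *. nra.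
Qed.

Lemma PI_bounds : 3 < PI <= 4.
Proof. pose proof PI2_3_2. pose proof PI_4. lra. Qed.

Lemma PI_div_bounds m : 1 <= m -> 0 < PI / (6 * m) <= PI / 6.
Proof.
  intros Hm. pose proof PI_RGT_0. split; [apply Rdiv_lt_0_compat; lra|].
  unfold Rdiv. apply Rmult_le_compat_l; [lra|]. apply Rinv_le_contravar; lra.
Qed.

Lemma polar_admissible n (M : R) (rad ang : nat -> R) : 0 <= M ->
  (forall j, (j < n)%nat -> 1 <= rad j <= M) ->
  (forall j, (j < n)%nat ->
     1 <= rad j * rad j + rad (rim_pred n j) * rad (rim_pred n j)
          - 2 * rad j * rad (rim_pred n j) * cos (ang j - ang (rim_pred n j)) <= M * M) ->
  admissible_cycle n M (fun j => (rad j * cis (ang j))%C).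
Proof.
  intros HM Hrad Hdist j Hj. specialize (Hrad j Hj). specialize (Hdist j Hj).
  rewrite Cmod_polar, Cmod_polar_sub by lra. split; [lra|split].
  - rewrite <- sqrt_1. apply sqrt_le_1_alt. lra.
  - rewrite <- (sqrt_square M) by exact HM. apply sqrt_le_1_alt. lra.
Qed.

Lemma two_sin_ge_1 t : PI / 6 <= t <= PI / 2 -> 1 <= 2 * sin t.
Proof.
  intros Ht. pose proof PI_RGT_0.
  assert (sin (PI / 6) <= sin t) by (apply sin_incr_1; lra). rewrite sin_PI6 in *. lra.
Qed.

Lemma chord_sq t : 2 - 2 * cos (2 * t) = 2 * sin t * (2 * sin t).
Proof. rewrite cos_2a_sin. ring. Qed.

Lemma wheel_flow_even n : (2 <= n)%nat -> Nat.even n = true -> has_complex_nz_flow (wheel n) 2.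
Proof.
  intros Hn Heven. apply (wheel_flow_iff n 2 Hn).
  exists (fun j => (1 * cis (if Nat.even j then 0 else PI / 3))%C).
  apply polar_admissible; [lra | intros; lra |]. intros j Hj.
  assert (Hpar : Nat.even (rim_pred n j) = negb (Nat.even j)).
  { destruct j as [|k]; simpl rim_pred.
    - replace (n - 1)%nat with (Nat.pred n) by lia.
      rewrite Nat.even_pred, <- Nat.negb_even, Heven by lia. reflexivity.
    - rewrite Nat.even_succ, <- Nat.negb_even, Bool.negb_involutive. reflexivity. }
  rewrite Hpar. destruct (Nat.even j); simpl;
    rewrite ?Rminus_0_l, ?Rminus_0_r, ?cos_neg, cos_PI3; lra.
Qed.

(* The points [e^(2 i t j)]: every rim step but the closing one has length [2 sin t]. *)
Lemma wheel_flow_rotation n t : (2 <= n)%nat -> PI / 6 <= t <= PI / 2 ->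
  1 <= 2 - 2 * cos (INR (n - 1) * (2 * t)) <= 2 * sin t * (2 * sin t) ->
  has_complex_nz_flow (wheel n) (1 + 2 * sin t).
Proof.
  intros Hn Ht Hclose. pose proof (two_sin_ge_1 t Ht).
  apply (wheel_flow_iff n _ Hn). replace (1 + 2 * sin t - 1) with (2 * sin t) by ring.
  exists (fun j => (1 * cis (INR j * (2 * t)))%C).
  apply polar_admissible; [lra | intros; lra |]. intros j Hj.
  destruct j as [|k]; simpl rim_pred.
  - replace (INR 0 * (2 * t) - INR (n - 1) * (2 * t)) with (- (INR (n - 1) * (2 * t)))
      by (simpl; ring).
    rewrite cos_neg. lra.
  - replace (INR (S k) * (2 * t) - INR k * (2 * t)) with (2 * t) by (rewrite S_INR; ring).
    pose proof (chord_sq t). nra.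
Qed.

Lemma INR_mod6 n k : Nat.modulo n 6 = k -> INR n = 6 * INR (n / 6) + INR k.
Proof.
  intros Hk. pose proof (Nat.div_mod_eq n 6) as Hdiv.
  rewrite Hdiv at 1. rewrite Hk, plus_INR, mult_INR. replace (INR 6) with 6 by (simpl; ring).
  ring.
Qed.

Lemma wheel_flow_1_mod6 n : Nat.modulo n 6 = 1%nat -> (3 <= n)%nat ->
  has_complex_nz_flow (wheel n) (1 + 2 * sin (PI / 6 + PI / (6 * (INR n - 1)))).
Proof.
  intros Hmod Hn. pose proof PI_RGT_0.
  assert (HnR : INR n = 6 * INR (n / 6) + 1)
    by (rewrite (INR_mod6 n 1 Hmod); simpl (INR 1); ring).
  assert (Hn7 : 7 <= INR n).
  { pose proof (Nat.div_mod_eq n 6). replace 7 with (INR 7) by (simpl; ring).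
    apply le_INR. lia. }
  set (t := PI / 6 + PI / (6 * (INR n - 1))).
  assert (Ht : PI / 6 <= t <= PI / 2)
    by (pose proof (PI_div_bounds (INR n - 1)); unfold t; lra).
  apply wheel_flow_rotation; [lia | exact Ht |].
  replace (INR (n - 1) * (2 * t)) with (PI / 3 + 2 * INR (n / 6) * PI).
  - rewrite cos_period, cos_PI3. pose proof (two_sin_ge_1 t Ht). nra.
  - unfold t. rewrite minus_INR by lia. change (INR 1) with 1. rewrite HnR. field. lra.
Qed.

Lemma wheel_flow_5_mod6 n : Nat.modulo n 6 = 5%nat ->
  has_complex_nz_flow (wheel n) (1 + 2 * sin (PI / 6 + PI / (6 * INR n))).
Proof.
  intros Hmod.
  assert (HnR : INR n = 6 * INR (n / 6) + 5)
    by (rewrite (INR_mod6 n 5 Hmod); simpl (INR 5); ring).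
  assert (Hn : (5 <= n)%nat) by (pose proof (Nat.div_mod_eq n 6); lia).
  pose proof (pos_INR (n / 6)). pose proof PI_RGT_0.
  set (t := PI / 6 + PI / (6 * INR n)).
  assert (Ht : PI / 6 <= t <= PI / 2)
    by (pose proof (PI_div_bounds (INR n)); unfold t; lra).
  apply wheel_flow_rotation; [lia | exact Ht |].
  replace (INR (n - 1) * (2 * t)) with (- (2 * t) + 2 * INR (S (n / 6)) * PI).
  - rewrite cos_period, cos_neg, chord_sq. pose proof (two_sin_ge_1 t Ht). nra.
  - unfold t. rewrite minus_INR, S_INR by lia. change (INR 1) with 1. rewrite HnR. field. lra.
Qed.

(* The points [e^(2 i t j)] for [j < n - 1], followed by a point of modulus [2 sin t]
   joined to both of its neighbours by rim steps of length 1. *)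
Lemma wheel_flow_3_mod6 n : Nat.modulo n 6 = 3%nat ->
  has_complex_nz_flow (wheel n) (1 + 2 * sin (PI / 6 + PI / (6 * (INR n - 1)))).
Proof.
  intros Hmod.
  assert (HnR : INR n = 6 * INR (n / 6) + 3)
    by (rewrite (INR_mod6 n 3 Hmod); simpl (INR 3); ring).
  assert (Hn : (3 <= n)%nat) by (pose proof (Nat.div_mod_eq n 6); lia).
  pose proof (pos_INR (n / 6)). pose proof PI_RGT_0.
  set (t := PI / 6 + PI / (6 * (INR n - 1))).
  assert (Ht : PI / 6 <= t <= PI / 2)
    by (pose proof (PI_div_bounds (INR n - 1)); unfold t; lra).
  pose proof (two_sin_ge_1 t Ht) as HM. pose proof (chord_sq t) as Hchord.
  set (M := 2 * sin t) in *. set (mu := PI / 2 - t).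
  assert (Hmu : 2 * cos mu = M) by (unfold mu, M; rewrite cos_shift; ring).
  assert (Hclose : INR (n - 2) * (2 * t) - mu = mu + 2 * INR (n / 6) * PI).
  { unfold mu, t. rewrite minus_INR by lia. change (INR 2) with 2. rewrite HnR. field. lra. }
  apply (wheel_flow_iff n _ ltac:(lia)). replace (1 + M - 1) with M by ring.
  pose (rad j := if Nat.eqb j (n - 1) then M else 1).
  pose (ang j := if Nat.eqb j (n - 1) then INR (n - 2) * (2 * t) - mu else INR j * (2 * t)).
  exists (fun j => (rad j * cis (ang j))%C).
  apply polar_admissible; [lra | intros j _; unfold rad; destruct (Nat.eqb j (n - 1)); lra |].
  intros j Hj. unfold rad, ang. destruct j as [|k]; simpl rim_pred.
  - replace (Nat.eqb 0 (n - 1)) with false by (symmetry; apply Nat.eqb_neq; lia).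
    rewrite Nat.eqb_refl, Hclose.
    replace (INR 0 * (2 * t) - (mu + 2 * INR (n / 6) * PI))
      with (- (mu + 2 * INR (n / 6) * PI)) by (change (INR 0) with 0; ring).
    rewrite cos_neg, cos_period. nra.
  - replace (Nat.eqb k (n - 1)) with false by (symmetry; apply Nat.eqb_neq; lia).
    destruct (Nat.eqb_spec (S k) (n - 1)) as [Hlast|Hlast].
    + replace k with (n - 2)%nat by lia.
      replace (INR (n - 2) * (2 * t) - mu - INR (n - 2) * (2 * t)) with (- mu) by ring.
      rewrite cos_neg. nra.
    + replace (INR (S k) * (2 * t) - INR k * (2 * t)) with (2 * t) by (rewrite S_INR; ring).
      nra.
Qed.

(** * Trigonometry of a rim step *)

Lemma sqrt3_sq : sqrt 3 * sqrt 3 = 3.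
Proof. apply sqrt_sqrt. lra. Qed.

Lemma two_sin_pi6_add A : 2 * sin (PI / 6 + A) = cos A + sqrt 3 * sin A.
Proof. rewrite sin_plus, sin_PI6, cos_PI6. field. Qed.

Lemma two_sin_pi6_add_mul A B :
  2 * sin (PI / 6 + A) * (2 * sin (PI / 6 + B)) = 2 * sin (PI / 6 + (A + B)) + 4 * sin A * sin B.
Proof.
  rewrite !two_sin_pi6_add, cos_plus, sin_plus. pose proof sqrt3_sq. nsatz.
Qed.

Lemma two_cos_pi3_sub S : 2 * cos (PI / 3 - S) = cos S + sqrt 3 * sin S.
Proof. rewrite cos_minus, cos_PI3, sin_PI3. field. Qed.

(* The third side of the triangle with sides [2 sin (PI/6 + A)], [2 sin (PI/6 + B)]
   and included angle [PI/3 - (A + B)]. *)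
Lemma chord_pi3_sub A B :
  let a := 2 * sin (PI / 6 + A) in let b := 2 * sin (PI / 6 + B) in
  a * a + b * b - 2 * a * b * cos (PI / 3 - (A + B)) = 1 - 8 * sin A * sin B * cos (A + B).
Proof.
  intros a b.
  replace (2 * a * b * cos (PI / 3 - (A + B))) with (a * b * (2 * cos (PI / 3 - (A + B)))) by ring.
  unfold a, b. rewrite !two_sin_pi6_add, two_cos_pi3_sub, cos_plus, sin_plus.
  pose proof sqrt3_sq. pose proof (sin2_cos2 A). pose proof (sin2_cos2 B). unfold Rsqr in *.
  nsatz.
Qed.

Lemma cos_law_split a b T p :
  a * a + b * b - 2 * a * b * cos T =
  (a * cos p - b * cos (T - p)) ^ 2 + (a * sin p + b * sin (T - p)) ^ 2.
Proof.
  rewrite cos_minus, sin_minus.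
  pose proof (sin2_cos2 T). pose proof (sin2_cos2 p). unfold Rsqr in *. simpl. nsatz.
Qed.

(* With [u = a - b] and [v = M - b], the excess of the left side over [M * M] is at
   most [v * (u M^2 + v - M)], which is nonpositive since [M^3 - M^2 - 1 <= 0]. *)
Lemma sq_sub_mul_le a b M : 1 <= b <= a -> a <= M -> M * M <= 2 ->
  (a - b) * (a - b) * (M * M) + a * b <= M * M.
Proof.
  intros Hb Ha HM.
  set (u := a - b). set (v := M - b).
  assert (Hcube : M * M * M - M * M - 1 <= 0) by nra.
  assert (Hlin : u * (M * M) + v - M <= 0).
  { assert (u * (M * M) <= v * (M * M)) by (apply Rmult_le_compat_r; unfold u, v; nra).
    assert (v * (M * M + 1) <= (M - 1) * (M * M + 1)) by (apply Rmult_le_compat_r; unfold v; nra).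
    nra. }
  assert (Hv : 0 <= v) by (unfold v; lra).
  assert (Hf : (a - b) * (a - b) * (M * M) + a * b - M * M <= v * (u * (M * M) + v - M)).
  { assert (0 <= u * (M * M) * (v - u)) by (apply Rmult_le_pos; unfold u, v; nra).
    assert (0 <= u * v) by (unfold u, v; nra).
    unfold u, v in *. nra. }
  assert (v * (u * (M * M) + v - M) <= v * 0) by (apply Rmult_le_compat_l; lra).
  unfold u, v in *. lra.
Qed.

(* The chord is at least its projection [a cos p - b cos (T - p)] on a well-chosen
   direction [p], which [two_sin_pi6_add_mul] evaluates. *)
Lemma chord_pi3_add_ge A B U : 0 <= A <= U -> 0 <= B <= U -> U <= PI / 12 ->
  let a := 2 * sin (PI / 6 + A) in let b := 2 * sin (PI / 6 + B) in
  2 * sin (PI / 6 + U) * (2 * sin (PI / 6 + U)) <=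
  a * a + b * b - 2 * a * b * cos (PI / 3 + 2 * U - (A + B)).
Proof.
  intros HA HB HU a b. pose proof PI_bounds.
  rewrite (cos_law_split a b _ ((PI / 6 + (U - A)) - PI / 2)).
  replace (PI / 3 + 2 * U - (A + B) - (PI / 6 + (U - A) - PI / 2))
    with (PI / 2 + (PI / 6 + (U - B))) by field.
  assert (Ep : cos (PI / 6 + (U - A) - PI / 2) = sin (PI / 6 + (U - A)))
    by (rewrite cos_minus, cos_PI2, sin_PI2; ring).
  assert (Eq : cos (PI / 2 + (PI / 6 + (U - B))) = - sin (PI / 6 + (U - B)))
    by (rewrite (cos_plus (PI / 2)), cos_PI2, sin_PI2; ring).
  rewrite Ep, Eq.
  set (X := a * sin (PI / 6 + (U - A)) - b * - sin (PI / 6 + (U - B))).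
  assert (HX : 2 * X = 2 * (2 * sin (PI / 6 + U))
                       + 4 * sin A * sin (U - A) + 4 * sin B * sin (U - B)).
  { unfold X, a, b.
    pose proof (two_sin_pi6_add_mul A (U - A)) as EA.
    pose proof (two_sin_pi6_add_mul B (U - B)) as EB.
    replace (A + (U - A)) with U in EA by ring. replace (B + (U - B)) with U in EB by ring. lra. }
  assert (0 <= sin A) by (apply sin_ge_0; lra). assert (0 <= sin B) by (apply sin_ge_0; lra).
  assert (0 <= sin (U - A)) by (apply sin_ge_0; lra).
  assert (0 <= sin (U - B)) by (apply sin_ge_0; lra).
  assert (0 <= sin (PI / 6 + U)) by (apply sin_ge_0; lra).
  assert (2 * sin (PI / 6 + U) <= X) by nra.
  pose proof (pow2_ge_0
    (a * sin (PI / 6 + (U - A) - PI / 2) + b * sin (PI / 2 + (PI / 6 + (U - B))))).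
  nra.
Qed.

Lemma turn_bounds_of_chord a b A B U d t :
  a = 2 * sin (PI / 6 + A) -> b = 2 * sin (PI / 6 + B) ->
  0 <= A <= U -> 0 <= B <= U -> U <= PI / 12 ->
  1 <= d <= 2 * sin (PI / 6 + U) -> 0 <= t <= PI ->
  cos t * (2 * a * b) = a * a + b * b - d * d ->
  PI / 3 - (A + B) <= t <= PI / 3 + 2 * U - (A + B).
Proof.
  intros Ea Eb HA HB HU Hd Ht Hcos. pose proof PI_bounds.
  assert (1 <= a) by (rewrite Ea; apply two_sin_ge_1; lra).
  assert (1 <= b) by (rewrite Eb; apply two_sin_ge_1; lra).
  split.
  - apply cos_decr_0; try lra.
    pose proof (chord_pi3_sub A B) as Hchord. cbv zeta in Hchord. rewrite <- Ea, <- Eb in Hchord.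
    assert (0 <= sin A) by (apply sin_ge_0; lra). assert (0 <= sin B) by (apply sin_ge_0; lra).
    assert (0 <= cos (A + B)) by (apply cos_ge_0; lra).
    assert (0 <= sin A * sin B * cos (A + B)) by (repeat apply Rmult_le_pos; lra).
    apply (Rmult_le_reg_r (2 * a * b)); [nra|]. nra.
  - apply cos_decr_0; try lra.
    pose proof (chord_pi3_add_ge A B U HA HB HU) as Hchord. cbv zeta in Hchord.
    rewrite <- Ea, <- Eb in Hchord.
    apply (Rmult_le_reg_r (2 * a * b)); [nra|]. nra.
Qed.

Lemma turn_cos_le a b d M t : 1 <= a <= M -> 1 <= b <= M -> 1 <= d -> M * M <= 2 ->
  cos t * (2 * a * b) = a * a + b * b - d * d -> cos t <= 1 - 1 / (2 * (M * M)).
Proof.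
  intros Ha Hb Hd HM Hcos.
  assert (Hpoly : (a - b) * (a - b) * (M * M) + a * b <= M * M).
  { destruct (Rle_dec b a).
    - apply sq_sub_mul_le; lra.
    - replace ((a - b) * (a - b)) with ((b - a) * (b - a)) by ring.
      rewrite (Rmult_comm a b). apply sq_sub_mul_le; lra. }
  assert (0 < M * M) by nra.
  apply (Rmult_le_reg_r (2 * a * b * (M * M))); [nra|].
  replace ((1 - 1 / (2 * (M * M))) * (2 * a * b * (M * M))) with (2 * a * b * (M * M) - a * b)
    by (field; lra).
  replace (cos t * (2 * a * b * (M * M))) with ((a * a + b * b - d * d) * (M * M))
    by (rewrite <- Hcos; ring).
  assert (M * M <= d * d * (M * M))
    by (rewrite <- (Rmult_1_l (M * M)) at 1; apply Rmult_le_compat_r; nra).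
  nra.
Qed.

Lemma half_le_sin_PI4 rho : 0 <= rho -> rho * rho <= 2 -> rho / 2 <= sin (PI / 4).
Proof.
  intros H0 H2. rewrite sin_PI4.
  assert (Hs : sqrt 2 * sqrt 2 = 2) by (apply sqrt_sqrt; lra).
  assert (0 < sqrt 2) by (apply sqrt_lt_R0; lra).
  replace (1 / sqrt 2) with (sqrt 2 / 2) by (field_simplify_eq; lra).
  assert (rho <= sqrt 2) by (rewrite <- (sqrt_square rho) by lra; apply sqrt_le_1_alt; lra).
  lra.
Qed.

(* Unit points at unit distance subtend [PI/3] at
   the origin; [turn_bounds_of_chord] shows that the excesses of two moduli bound how
   far the angle of a rim step between them may deviate from [PI/3]. *)
Definition excess (rho : R) : R := asin (rho / 2) - PI / 6.

Lemma excess_spec rho : 1 <= rho -> rho * rho <= 2 ->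
  0 <= excess rho <= PI / 12 /\ 2 * sin (PI / 6 + excess rho) = rho.
Proof.
  intros H1 H2. pose proof PI_bounds. pose proof (asin_bound (rho / 2)).
  pose proof (half_le_sin_PI4 rho ltac:(lra) H2). pose proof (SIN_bound (PI / 4)).
  assert (Hsin : sin (asin (rho / 2)) = rho / 2) by (apply sin_asin; split; lra).
  unfold excess. replace (PI / 6 + (asin (rho / 2) - PI / 6)) with (asin (rho / 2)) by ring.
  split; [split|lra].
  - assert (PI / 6 <= asin (rho / 2)); [|lra].
    apply sin_incr_0; try lra. rewrite sin_PI6, Hsin. lra.
  - assert (asin (rho / 2) <= PI / 4); [|lra].
    apply sin_incr_0; lra.
Qed.

Lemma excess_le rho sigma : 1 <= rho <= sigma -> sigma * sigma <= 2 -> excess rho <= excess sigma.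
Proof.
  intros H1 H2. pose proof (asin_bound (rho / 2)). pose proof (asin_bound (sigma / 2)).
  pose proof (half_le_sin_PI4 sigma ltac:(lra) H2). pose proof PI_bounds.
  pose proof (SIN_bound (PI / 4)).
  unfold excess. apply Rplus_le_compat_r, sin_incr_0; try lra.
  rewrite !sin_asin by lra. lra.
Qed.

Lemma excess_lt rho d : 1 <= rho -> rho * rho <= 2 -> 0 <= d <= PI / 3 ->
  rho < 2 * sin (PI / 6 + d) -> excess rho < d.
Proof.
  intros H1 H2 Hd Hlt. pose proof PI_bounds. pose proof (asin_bound (rho / 2)).
  pose proof (half_le_sin_PI4 rho ltac:(lra) H2).
  pose proof (SIN_bound (PI / 4)).
  unfold excess. destruct (Rlt_le_dec (asin (rho / 2)) (PI / 6 + d)) as [|Hge]; [lra|].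
  assert (sin (PI / 6 + d) <= sin (asin (rho / 2))) by (apply sin_incr_1; lra).
  rewrite sin_asin in * by lra. lra.
Qed.

(** * Turning angles *)

Lemma cos_eq_1_winding s : cos s = 1 -> exists k : Z, s = 2 * IZR k * PI.
Proof.
  intros Hc. replace s with (2 * (s / 2)) in Hc by field. rewrite cos_2a_sin in Hc.
  assert (Hh : sin (s / 2) = 0) by nra.
  destruct (sin_eq_0_0 _ Hh) as [k Hk]. exists k. lra.
Qed.

Lemma cis_cycle_winding n (t : nat -> R) (u : nat -> C) : (1 <= n)%nat -> u 0%nat <> 0%C ->
  (forall j, (j < n)%nat -> u j = (cis (t j) * u (rim_pred n j))%C) ->
  exists k : Z, rsum t (seq 0 n) = 2 * IZR k * PI.
Proof.
  intros Hn Hu0 Hturn.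
  assert (Hpath : forall m, (m < n)%nat -> u m = (cis (rsum t (seq 1 m)) * u 0%nat)%C).
  { induction m as [|m IH]; intros Hm.
    - unfold cis, rsum. simpl. rewrite cos_0, sin_0. unfold Cmult. simpl.
      destruct (u 0%nat). f_equal; simpl; ring.
    - rewrite (Hturn (S m) Hm). simpl rim_pred. rewrite IH by lia.
      rewrite seq_S, rsum_app, Rplus_comm, cis_add. unfold rsum at 2. simpl.
      rewrite Rplus_0_r. ring. }
  destruct n as [|m]; [lia|].
  pose proof (Hturn 0%nat ltac:(lia)) as Hclose. simpl rim_pred in Hclose.
  rewrite Nat.sub_0_r, (Hpath m), Cmult_assoc, <- cis_add in Hclose by lia.
  change (t 0%nat + rsum t (seq 1 m)) with (rsum t (seq 0 (S m))) in Hclose.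
  set (s := rsum t (seq 0 (S m))) in *.
  assert (Hcis : cis s = 1%C).
  { apply (f_equal (fun w => (w / u 0%nat)%C)) in Hclose.
    field_simplify in Hclose; [|exact Hu0..]. symmetry. exact Hclose. }
  apply cos_eq_1_winding. exact (f_equal fst Hcis).
Qed.

Definition dot (w v : C) : R := fst w * fst v + snd w * snd v.
Definition cross (w v : C) : R := snd w * fst v - fst w * snd v.

(* The angle from [v] to [w], when it lies in [(-PI/2, PI/2)], i.e. when [dot w v > 0]. *)
Definition turn (w v : C) : R := atan (cross w v / dot w v).

Definition direction (w : C) : C := (fst w / Cmod w, snd w / Cmod w).

Lemma Cmod_sub_sq w v :
  Cmod (w - v)%C * Cmod (w - v)%C = Cmod w * Cmod w + Cmod v * Cmod v - 2 * dot w v.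
Proof. rewrite !Cmod_sq. unfold dot. simpl. ring. Qed.

Lemma dot_cross_sq w v :
  dot w v * dot w v + cross w v * cross w v = Cmod w * Cmod w * (Cmod v * Cmod v).
Proof. rewrite !Cmod_sq. unfold dot, cross. ring. Qed.

Lemma Cmod_pos_of_dot w v : 0 < dot w v -> 0 < Cmod w /\ 0 < Cmod v.
Proof.
  intros Hdot. pose proof (dot_cross_sq w v). pose proof (Cmod_ge_0 w). pose proof (Cmod_ge_0 v).
  destruct (Req_dec (Cmod w) 0) as [Ew|Ew], (Req_dec (Cmod v) 0) as [Ev|Ev];
    rewrite ?Ew, ?Ev in *; try nra; lra.
Qed.

Lemma turn_polar w v : 0 < dot w v ->
  cos (turn w v) = dot w v / (Cmod w * Cmod v) /\ sin (turn w v) = cross w v / (Cmod w * Cmod v).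
Proof.
  intros Hdot. destruct (Cmod_pos_of_dot w v Hdot). unfold turn.
  assert (Hsec : sqrt (1 + (cross w v / dot w v)²) = Cmod w * Cmod v / dot w v).
  { assert (0 < Cmod w * Cmod v) by nra.
    replace (1 + (cross w v / dot w v)²)
      with ((Cmod w * Cmod v) * (Cmod w * Cmod v) / (dot w v * dot w v))
      by (replace (Cmod w * Cmod v * (Cmod w * Cmod v))
            with (dot w v * dot w v + cross w v * cross w v) by (rewrite dot_cross_sq; ring);
          unfold Rsqr; field; lra).
    rewrite sqrt_div_alt by nra. rewrite !sqrt_square by lra. reflexivity. }
  rewrite cos_atan, sin_atan, Hsec. split; field; lra.
Qed.

Lemma turn_law_of_cosines w v : 0 < dot w v ->
  cos (Rabs (turn w v)) * (2 * Cmod v * Cmod w) =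
  Cmod v * Cmod v + Cmod w * Cmod w - Cmod (w - v)%C * Cmod (w - v)%C.
Proof.
  intros Hdot. destruct (Cmod_pos_of_dot w v Hdot). destruct (turn_polar w v Hdot) as [Hcos _].
  assert (Habs : cos (Rabs (turn w v)) = cos (turn w v)).
  { unfold Rabs. destruct (Rcase_abs (turn w v)); [apply cos_neg|reflexivity]. }
  rewrite Habs, Hcos, Cmod_sub_sq. field. split; lra.
Qed.

Lemma Rabs_turn_lt w v : Rabs (turn w v) < PI / 2.
Proof. unfold turn. pose proof (atan_bound (cross w v / dot w v)). apply Rabs_def1; lra. Qed.

Lemma direction_turn w v : 0 < dot w v -> direction w = (cis (turn w v) * direction v)%C.
Proof.
  intros Hdot. destruct (Cmod_pos_of_dot w v Hdot).
  pose proof (Cmod_sq v) as Hv.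
  destruct (turn_polar w v Hdot) as [Hcos Hsin].
  unfold direction, cis, Cmult. simpl. rewrite Hcos, Hsin. unfold dot, cross in *.
  f_equal; field_simplify_eq; try (split; lra);
    rewrite <- !Rsqr_pow2; unfold Rsqr; rewrite Hv; ring.
Qed.

Lemma direction_neq_0 w : 0 < Cmod w -> direction w <> 0%C.
Proof.
  intros Hw E. pose proof (Cmod_sq w) as Hsq.
  assert (Hx : fst (direction w) * Cmod w = fst w) by (unfold direction; simpl; field; lra).
  assert (Hy : snd (direction w) * Cmod w = snd w) by (unfold direction; simpl; field; lra).
  rewrite E in Hx, Hy. simpl in Hx, Hy. nra.
Qed.

(* The conclusion of [turn_bounds_of_chord] for every rim step of a cycle. *)
Definition turn_bounds (n : nat) (U : R) (e th : nat -> R) : Prop :=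
  forall j, (j < n)%nat -> 0 <= e j <= U /\
    PI / 3 - (e (rim_pred n j) + e j) <= Rabs (th j) <= PI / 3 + 2 * U - (e (rim_pred n j) + e j).

Section AdmissibleTurns.

Variables (n : nat) (M : R) (z : nat -> C).
Hypothesis n_pos : (1 <= n)%nat.
Hypothesis M_sq_lt : M * M < 2.
Hypothesis z_adm : admissible_cycle n M z.

Lemma admissible_dot_pos j : (j < n)%nat -> 0 < dot (z j) (z (rim_pred n j)).
Proof.
  intros Hj. destruct (z_adm j Hj) as [[H1 H2] [D1 D2]].
  destruct (z_adm (rim_pred n j) (rim_pred_lt n j Hj)) as [[P1 P2] _].
  pose proof (Cmod_sub_sq (z j) (z (rim_pred n j))). nra.
Qed.

Lemma admissible_turn_bounds :
  turn_bounds n (excess M) (fun j => excess (Cmod (z j))) (fun j => turn (z j) (z (rim_pred n j))).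
Proof.
  intros j Hj. pose proof (rim_pred_lt n j Hj) as Hp.
  destruct (z_adm j Hj) as [[H1 H2] [D1 D2]]. destruct (z_adm _ Hp) as [[P1 P2] _].
  set (p := rim_pred n j) in *.
  destruct (excess_spec (Cmod (z j))) as [Ej Sj]; [lra|nra|].
  destruct (excess_spec (Cmod (z p))) as [Ep Sp]; [lra|nra|].
  destruct (excess_spec M) as [EM SM]; [lra|nra|].
  pose proof (excess_le (Cmod (z j)) M ltac:(lra) ltac:(lra)).
  pose proof (excess_le (Cmod (z p)) M ltac:(lra) ltac:(lra)).
  split; [lra|].
  apply (turn_bounds_of_chord (Cmod (z p)) (Cmod (z j)) _ _ (excess M) (Cmod (z j - z p)%C));
    [symmetry; exact Sp | symmetry; exact Sj | lra | lra | lra | rewrite SM; lra | |].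
  - pose proof (Rabs_pos (turn (z j) (z p))). pose proof (Rabs_turn_lt (z j) (z p)).
    pose proof PI_RGT_0. lra.
  - apply turn_law_of_cosines, admissible_dot_pos, Hj.
Qed.

Lemma admissible_turn_cos j : (j < n)%nat ->
  cos (Rabs (turn (z j) (z (rim_pred n j)))) <= 1 - 1 / (2 * (M * M)).
Proof.
  intros Hj. pose proof (rim_pred_lt n j Hj) as Hp.
  destruct (z_adm j Hj) as [Hzj [D1 _]]. destruct (z_adm _ Hp) as [Hzp _].
  apply (turn_cos_le (Cmod (z (rim_pred n j))) (Cmod (z j)) (Cmod (z j - z (rim_pred n j))%C));
    [exact Hzp | exact Hzj | exact D1 | lra |].
  apply turn_law_of_cosines, admissible_dot_pos, Hj.
Qed.

Lemma admissible_winding :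
  exists k : Z, rsum (fun j => turn (z j) (z (rim_pred n j))) (seq 0 n) = 2 * IZR k * PI.
Proof.
  apply (cis_cycle_winding n _ (fun j => direction (z j)) n_pos).
  - apply direction_neq_0. destruct (z_adm 0%nat ltac:(lia)) as [[H1 _] _]. lra.
  - intros j Hj. apply direction_turn, admissible_dot_pos, Hj.
Qed.

End AdmissibleTurns.

Definition sgn (x : R) : R := if Rle_dec 0 x then 1 else -1.

Lemma sgn_cases x : sgn x = 1 \/ sgn x = -1.
Proof. unfold sgn. destruct (Rle_dec 0 x); auto. Qed.

Lemma sgn_mul x : sgn x * x = Rabs x.
Proof.
  unfold sgn. destruct (Rle_dec 0 x).
  - rewrite Rabs_pos_eq; lra.
  - rewrite Rabs_left; lra.
Qed.

Lemma rsum_signs (s : nat -> R) l : (forall i, In i l -> s i = 1 \/ s i = -1) ->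
  exists c : Z, rsum s l = INR (length l) - 2 * IZR c.
Proof.
  induction l as [|a l IH]; intros Hs; [exists 0%Z; unfold rsum; simpl; ring|].
  destruct IH as [c Hc]; [intros i Hi; apply Hs; simpl; auto|].
  change (rsum s (a :: l)) with (s a + rsum s l). simpl length. rewrite Hc, S_INR.
  destruct (Hs a (or_introl eq_refl)) as [-> | ->]; [exists c | exists (c + 1)%Z];
    rewrite ?plus_IZR; simpl; ring.
Qed.

Lemma rim_constant n (s : nat -> R) : (forall j, (j < n)%nat -> s j = s (rim_pred n j)) ->
  forall j, (j < n)%nat -> s j = s 0%nat.
Proof.
  intros H j. induction j as [|j IH]; intros Hj; [reflexivity|].
  rewrite (H (S j) Hj). apply IH. lia.
Qed.

Section TurnSums.

Variables (n : nat) (U : R) (e th : nat -> R).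
Hypothesis n_pos : (1 <= n)%nat.
Hypothesis th_bounds : turn_bounds n U e th.

Let excess_sum_bounds : 0 <= rsum e (seq 0 n) <= U * INR n.
Proof.
  split.
  - rewrite <- (Rmult_0_r (INR (length (seq 0 n)))), <- rsum_const.
    apply rsum_le. intros j Hj. apply in_seq in Hj. apply th_bounds. lia.
  - rewrite <- (length_seq n 0) at 2. rewrite Rmult_comm, <- rsum_const.
    apply rsum_le. intros j Hj. apply in_seq in Hj. apply th_bounds. lia.
Qed.

Lemma abs_turn_sum_near :
  Rabs (rsum (fun j => Rabs (th j)) (seq 0 n) - INR n * (PI / 3)) <= 2 * U * INR n.
Proof.
  pose proof excess_sum_bounds.
  assert (Hpair : rsum (fun j => e (rim_pred n j) + e j) (seq 0 n) = 2 * rsum e (seq 0 n))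
    by (rewrite rsum_plus, rsum_rim_pred by exact n_pos; ring).
  assert (Hlo : rsum (fun j => PI / 3 - (e (rim_pred n j) + e j)) (seq 0 n)
                <= rsum (fun j => Rabs (th j)) (seq 0 n))
    by (apply rsum_le; intros j Hj; apply in_seq in Hj; apply th_bounds; lia).
  assert (Hhi : rsum (fun j => Rabs (th j)) (seq 0 n)
                <= rsum (fun j => PI / 3 + 2 * U - (e (rim_pred n j) + e j)) (seq 0 n))
    by (apply rsum_le; intros j Hj; apply in_seq in Hj; apply th_bounds; lia).
  rewrite rsum_minus, rsum_const, length_seq, Hpair in Hlo, Hhi.
  apply Rabs_le. split; nra.
Qed.

Lemma signed_excess_le (s : nat -> R) : (forall j, s j = 1 \/ s j = -1) ->
  rsum (fun j => s j * (Rabs (th j) - PI / 3)) (seq 0 n)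
  <= 2 * U * INR n - U / 2 * rsum (fun j => Rabs (s j - s (rim_pred n j))) (seq 0 n).
Proof.
  intros Hs.
  assert (Hstep : forall j, (j < n)%nat ->
    s j * (Rabs (th j) - PI / 3) <=
    (2 * U + U / 2 * (s j - s (rim_pred n j)) - U / 2 * Rabs (s j - s (rim_pred n j)))
    - s j * e j + s (rim_pred n j) * e (rim_pred n j)).
  { intros j Hj. destruct (th_bounds j Hj) as [Hej Hth].
    destruct (th_bounds _ (rim_pred_lt n j Hj)) as [Hep _].
    destruct (Hs j) as [-> | ->], (Hs (rim_pred n j)) as [-> | ->];
      unfold Rabs at 2; destruct (Rcase_abs _); lra. }
  eapply Rle_trans; [apply rsum_le; intros j Hj; apply in_seq in Hj; apply Hstep; lia|].
  repeat (rewrite rsum_plus || rewrite rsum_minus || rewrite rsum_scal).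
  rewrite rsum_const, length_seq.
  rewrite (rsum_rim_pred n s), (rsum_rim_pred n (fun j => s j * e j)) by exact n_pos. lra.
Qed.

Lemma sign_changes_ge (s : nat -> R) j0 : (forall j, s j = 1 \/ s j = -1) ->
  (j0 < n)%nat -> s j0 <> s (rim_pred n j0) ->
  4 <= rsum (fun j => Rabs (s j - s (rim_pred n j))) (seq 0 n).
Proof.
  intros Hs Hj0 Hne.
  assert (Hjump : Rabs (s j0 - s (rim_pred n j0)) = 2).
  { destruct (Hs j0) as [E|E], (Hs (rim_pred n j0)) as [F|F]; rewrite E, F in *;
      unfold Rabs; destruct (Rcase_abs _); lra. }
  pose proof (rsum_abs_ge_of_sum0 (fun j => s j - s (rim_pred n j)) n j0 Hj0) as H.
  cbv beta in H. rewrite Hjump in H. apply H.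
  rewrite rsum_minus, rsum_rim_pred by exact n_pos. ring.
Qed.

Lemma signed_excess_abs_le (s : nat -> R) : (forall j, s j = 1 \/ s j = -1) ->
  Rabs (rsum (fun j => s j * (Rabs (th j) - PI / 3)) (seq 0 n))
  <= 2 * U * INR n - U / 2 * rsum (fun j => Rabs (s j - s (rim_pred n j))) (seq 0 n).
Proof.
  intros Hs. pose proof (signed_excess_le s Hs).
  assert (Hneg : forall j, - s j = 1 \/ - s j = -1)
    by (intros j; destruct (Hs j) as [-> | ->]; [right|left]; ring).
  pose proof (signed_excess_le (fun j => - s j) Hneg) as Hopp.
  rewrite (rsum_ext (fun j => - s j * _) (fun j => - (s j * (Rabs (th j) - PI / 3)))),
    rsum_opp, (rsum_ext (fun j => Rabs (- s j - - s (rim_pred n j)))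
                        (fun j => Rabs (s j - s (rim_pred n j)))) in Hopp.
  - apply Rabs_le. lra.
  - intros j _. rewrite <- Rabs_Ropp. f_equal. ring.
  - intros j _. ring.
Qed.

(* For odd [n] the signed excess is an odd multiple of [PI/3]. *)
Lemma sgn_turn_excess_ge k : Nat.odd n = true -> rsum th (seq 0 n) = 2 * IZR k * PI ->
  PI / 3 <= Rabs (rsum (fun j => sgn (th j) * (Rabs (th j) - PI / 3)) (seq 0 n)).
Proof.
  intros Hodd Hk. pose proof PI_RGT_0.
  destruct (rsum_signs (fun j => sgn (th j)) (seq 0 n)) as [c Hc]; [intros; apply sgn_cases|].
  rewrite length_seq in Hc.
  rewrite (rsum_ext _ (fun j => th j - PI / 3 * sgn (th j))).
  2:{ intros j _. rewrite <- (sgn_mul (th j)) at 1.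
      destruct (sgn_cases (th j)) as [-> | ->]; ring. }
  rewrite rsum_minus, rsum_scal, Hc, Hk.
  replace (2 * IZR k * PI - PI / 3 * (INR n - 2 * IZR c))
    with (IZR (6 * k - Z.of_nat n + 2 * c) * (PI / 3))
    by (rewrite !plus_IZR, minus_IZR, !mult_IZR, <- INR_IZR_INZ; simpl; field).
  rewrite Rabs_mult, (Rabs_pos_eq (PI / 3)), <- abs_IZR by lra.
  assert (1 <= IZR (Z.abs (6 * k - Z.of_nat n + 2 * c))); [|nra].
  apply IZR_le. apply Nat.odd_spec in Hodd as [m ->]. lia.
Qed.

Lemma turn_signs_constant k : Nat.odd n = true -> 2 * U * (INR n - 1) < PI / 3 ->
  rsum th (seq 0 n) = 2 * IZR k * PI ->
  forall j, (j < n)%nat -> sgn (th j) = sgn (th (rim_pred n j)).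
Proof.
  intros Hodd HU Hk j Hj.
  destruct (Req_dec (sgn (th j)) (sgn (th (rim_pred n j)))) as [|Hne]; [assumption|exfalso].
  assert (Hs : forall i, sgn (th i) = 1 \/ sgn (th i) = -1) by (intros; apply sgn_cases).
  pose proof (sign_changes_ge (fun i => sgn (th i)) j Hs Hj Hne).
  pose proof (signed_excess_abs_le (fun i => sgn (th i)) Hs).
  pose proof (sgn_turn_excess_ge k Hodd Hk).
  assert (0 <= U) by (destruct (th_bounds 0%nat ltac:(lia)); lra).
  nra.
Qed.

Lemma abs_turn_sum_winding k : Nat.odd n = true -> 2 * U * (INR n - 1) < PI / 3 ->
  rsum th (seq 0 n) = 2 * IZR k * PI ->
  exists K : Z, rsum (fun j => Rabs (th j)) (seq 0 n) = 2 * IZR K * PI.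
Proof.
  intros Hodd HU Hk.
  pose proof (rim_constant n (fun j => sgn (th j)) (turn_signs_constant k Hodd HU Hk)) as Hconst.
  assert (Habs : rsum (fun j => Rabs (th j)) (seq 0 n) = sgn (th 0%nat) * rsum th (seq 0 n)).
  { rewrite <- rsum_scal. apply rsum_ext. intros j Hj. apply in_seq in Hj.
    rewrite <- (Hconst j) by lia. symmetry. apply sgn_mul. }
  rewrite Habs, Hk. destruct (sgn_cases (th 0%nat)) as [-> | ->]; [exists k | exists (- k)%Z];
    rewrite ?opp_IZR; ring.
Qed.

End TurnSums.

(** * Lower bounds *)

Lemma sq_lt_2_of_lt_two_sin M d : 0 <= M -> 0 <= d <= PI / 12 ->
  M < 2 * sin (PI / 6 + d) -> M * M < 2.
Proof.
  intros HM Hd Hlt. pose proof PI_bounds.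
  assert (sin (PI / 6 + d) <= sin (PI / 4)) by (apply sin_incr_1; lra).
  assert (0 <= sin (PI / 6 + d)) by (apply sin_ge_0; lra).
  assert (Hs : sin (PI / 4) * sin (PI / 4) = 1 / 2).
  { rewrite sin_PI4. pose proof (sqrt_sqrt 2 ltac:(lra)).
    assert (0 < sqrt 2) by (apply sqrt_lt_R0; lra).
    field_simplify_eq; [lra|lra]. }
  nra.
Qed.

Lemma wheel_flow_turns n r delta : (3 <= n)%nat -> Nat.odd n = true -> 0 < delta ->
  2 * delta * (INR n - 1) <= PI / 3 -> 2 <= r -> r < 1 + 2 * sin (PI / 6 + delta) ->
  has_complex_nz_flow (wheel n) r ->
  exists (th : nat -> R) (K : Z),
    rsum (fun j => Rabs (th j)) (seq 0 n) = 2 * IZR K * PI /\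
    Rabs (2 * IZR K * PI - INR n * (PI / 3)) < 2 * delta * INR n /\
    forall j, (j < n)%nat ->
      Rabs (th j) <= PI /\ cos (Rabs (th j)) <= 1 - 1 / (2 * ((r - 1) * (r - 1))).
Proof.
  intros Hn Hodd Hd Hdn Hr Hlt Hflow. pose proof PI_bounds.
  assert (Hn3 : 3 <= INR n) by (replace 3 with (INR 3) by (simpl; ring); apply le_INR; lia).
  assert (Hd12 : delta <= PI / 12) by nra.
  apply (wheel_flow_iff n r ltac:(lia)) in Hflow as [z Hz].
  remember (r - 1) as M eqn:HM.
  assert (HM2 : M * M < 2) by (apply (sq_lt_2_of_lt_two_sin M delta); lra).
  set (th := fun j => turn (z j) (z (rim_pred n j))).
  pose proof (admissible_turn_bounds n M z HM2 Hz) as Hb. fold th in Hb.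
  destruct (admissible_winding n M z ltac:(lia) HM2 Hz) as [k Hk]. fold th in Hk.
  assert (HU : excess M < delta) by (apply excess_lt; lra).
  assert (HU0 : 0 <= excess M) by (destruct (Hb 0%nat ltac:(lia)); lra).
  destruct (abs_turn_sum_winding n (excess M) _ _ ltac:(lia) Hb k Hodd ltac:(nra) Hk) as [K HK].
  exists th, K. split; [exact HK|split].
  - rewrite <- HK. eapply Rle_lt_trans; [apply (abs_turn_sum_near n _ _ th ltac:(lia) Hb)|]. nra.
  - intros j Hj. split.
    + pose proof (Rabs_turn_lt (z j) (z (rim_pred n j))). unfold th. lra.
    + apply (admissible_turn_cos n M z HM2 Hz j Hj).
Qed.

Lemma cos_le_taylor a : 0 <= a <= 1 -> cos a <= 1 - a * a / 2 + a * a * a * a / 24.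
Proof.
  intros Ha. pose proof PI_bounds.
  destruct (cos_bound a 0 ltac:(lra) ltac:(lra)) as [_ Hcos].
  unfold cos_approx, cos_term in Hcos. simpl in Hcos. unfold INR in Hcos. simpl in Hcos. lra.
Qed.

Lemma sin_ge_taylor a : 0 <= a <= 1 -> a - a * a * a / 6 <= sin a.
Proof.
  intros Ha. pose proof PI_bounds.
  destruct (sin_bound a 0 ltac:(lra) ltac:(lra)) as [Hsin _].
  unfold sin_approx, sin_term in Hsin. simpl in Hsin. unfold INR in Hsin. simpl in Hsin. lra.
Qed.

Lemma four_sin_pi6_add_sub_le x y : 0 <= y <= x -> x <= 1 / 9 -> x - y <= 2 * (x * y) ->
  4 * sin (PI / 6 + x) * sin (PI / 6 - y) <= 1.
Proof.
  intros Hy Hx Hd. pose proof PI_bounds. pose proof sqrt3_sq.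
  assert (Hr3 : 0 <= sqrt 3 <= 7 / 4) by (pose proof (sqrt_pos 3); split; nra).
  assert (Hprod : 4 * sin (PI / 6 + x) * sin (PI / 6 - y) =
                  cos x * cos y - 3 * (sin x * sin y) + sqrt 3 * sin (x - y)).
  { replace (PI / 6 - y) with (PI / 6 + - y) by ring.
    replace (4 * sin (PI / 6 + x) * sin (PI / 6 + - y))
      with (2 * sin (PI / 6 + x) * (2 * sin (PI / 6 + - y))) by ring.
    rewrite !two_sin_pi6_add, cos_neg, sin_neg, sin_minus.
    match goal with |- ?L = ?R =>
      replace L with (R + (3 - sqrt 3 * sqrt 3) * (sin x * sin y)) by ring end.
    rewrite sqrt3_sq. ring. }
  assert (Hsd : sqrt 3 * sin (x - y) <= 7 / 4 * (2 * (x * y))).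
  { assert (0 <= sin (x - y) <= x - y); [|nra].
    split; [apply sin_ge_0; lra|].
    destruct (Req_dec x y) as [->|]; [rewrite Rminus_diag, sin_0; lra|].
    apply Rlt_le, sin_lt_x. lra. }
  assert (Hcc : cos x * cos y <=
                (1 - x * x / 2 + x * x * x * x / 24) * (1 - y * y / 2 + y * y * y * y / 24)).
  { apply Rmult_le_compat; try (apply cos_ge_0; lra); apply cos_le_taylor; lra. }
  assert (Hss : (x - x * x * x / 6) * (y - y * y * y / 6) <= sin x * sin y).
  { apply Rmult_le_compat; try nra; apply sin_ge_taylor; lra. }
  assert ((1 - x * x / 2 + x * x * x * x / 24) * (1 - y * y / 2 + y * y * y * y / 24)
          - 3 * ((x - x * x * x / 6) * (y - y * y * y / 6)) + 7 / 2 * (x * y) <= 1).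
  { assert (0 <= x * y) by nra. assert (x * x <= 1 / 81) by nra. assert (y * y <= 1 / 81) by nra.
    assert (x * y <= x * x) by nra. assert (y * y <= x * y) by nra. nra. }
  lra.
Qed.

Lemma turn_gt_of_cos_le M x z t : 0 < z < PI / 2 -> 4 * sin (PI / 6 + x) * sin z <= 1 ->
  1 <= M < 2 * sin (PI / 6 + x) -> 0 <= t <= PI -> cos t <= 1 - 1 / (2 * (M * M)) -> 2 * z < t.
Proof.
  intros Hz Hest HM Ht Hcos. pose proof PI_bounds.
  assert (Hsz : 0 < sin z) by (apply sin_gt_0; lra).
  assert (H2Ms : 2 * M * sin z < 1) by nra.
  assert (Hc2 : 1 - 1 / (2 * (M * M)) < cos (2 * z)).
  { rewrite cos_2a_sin. apply (Rmult_lt_reg_r (2 * (M * M))); [nra|].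
    replace ((1 - 1 / (2 * (M * M))) * (2 * (M * M))) with (2 * (M * M) - 1) by (field; lra).
    assert (0 <= 2 * M * sin z) by nra. nra. }
  apply cos_decreasing_0; lra.
Qed.

Lemma is_complex_flow_number_intro G p : 2 <= p -> has_complex_nz_flow G p ->
  (forall r, 2 <= r < p -> ~ has_complex_nz_flow G r) -> is_complex_flow_number G p.
Proof.
  intros Hp Hflow Hmin. split; [exact Hp|split; [exact Hflow|]].
  intros r Hr Hfr. destruct (Rlt_le_dec r p) as [Hlt|Hle]; [|exact Hle].
  exfalso. exact (Hmin r (conj Hr Hlt) Hfr).
Qed.

Lemma turn_count_bound (K : Z) n q : Rabs (2 * IZR K * PI - INR n * (PI / 3)) < q * (PI / 3) ->
  Rabs (IZR (6 * K - Z.of_nat n)) < q.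
Proof.
  intros H. pose proof PI_RGT_0.
  replace (2 * IZR K * PI - INR n * (PI / 3)) with (IZR (6 * K - Z.of_nat n) * (PI / 3)) in H
    by (rewrite minus_IZR, mult_IZR, <- INR_IZR_INZ; simpl; field).
  rewrite Rabs_mult, (Rabs_pos_eq (PI / 3)) in H by lra.
  apply (Rmult_lt_reg_r (PI / 3)); lra.
Qed.

Lemma Zabs_lt_of_Rabs (D m : Z) : Rabs (IZR D) < IZR m -> (Z.abs D < m)%Z.
Proof. intros H. rewrite <- abs_IZR in H. apply lt_IZR, H. Qed.

Lemma odd_of_mod6 n k : Nat.modulo n 6 = k -> Nat.odd k = true -> Nat.odd n = true.
Proof.
  intros Hk Hodd. rewrite (Nat.div_mod_eq n 6), Hk, Nat.odd_add, Nat.odd_mul, Hodd. reflexivity.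
Qed.

Lemma wheel_no_flow_below_5_mod6 n r : Nat.modulo n 6 = 5%nat -> 2 <= r ->
  r < 1 + 2 * sin (PI / 6 + PI / (6 * INR n)) -> ~ has_complex_nz_flow (wheel n) r.
Proof.
  intros Hmod Hr Hlt Hflow. pose proof (Nat.div_mod_eq n 6). pose proof PI_bounds.
  assert (Hn : 5 <= INR n) by (replace 5 with (INR 5) by (simpl; ring); apply le_INR; lia).
  pose proof (PI_div_bounds (INR n) ltac:(lra)).
  destruct (wheel_flow_turns n r (PI / (6 * INR n)) ltac:(lia) (odd_of_mod6 n 5 Hmod eq_refl))
    as [th [K [_ [HK _]]]]; try lra.
  - replace (2 * (PI / (6 * INR n)) * (INR n - 1)) with (PI / 3 - 2 * (PI / (6 * INR n)))
      by (field; lra). lra.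
  - exact Hflow.
  - replace (2 * (PI / (6 * INR n)) * INR n) with (IZR 1 * (PI / 3)) in HK by (simpl; field; lra).
    apply turn_count_bound, Zabs_lt_of_Rabs in HK. lia.
Qed.

Lemma wheel_turn_sum_gt n r th : (7 <= n)%nat ->
  2 <= r -> r < 1 + 2 * sin (PI / 6 + PI / (6 * (INR n - 1))) ->
  (forall j, (j < n)%nat ->
     Rabs (th j) <= PI /\ cos (Rabs (th j)) <= 1 - 1 / (2 * ((r - 1) * (r - 1)))) ->
  (INR n - 1) * (PI / 3) < rsum (fun j => Rabs (th j)) (seq 0 n).
Proof.
  intros Hn Hr Hlt Hth. pose proof PI_bounds.
  assert (Hn7 : 7 <= INR n) by (replace 7 with (INR 7) by (simpl; ring); apply le_INR; lia).
  set (x := PI / (6 * (INR n - 1))) in *. set (y := PI / (6 * INR n)).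
  pose proof (PI_div_bounds (INR n) ltac:(lra)).
  assert (Hy : y < PI / 6).
  { unfold y, Rdiv. apply Rmult_lt_compat_l; [lra|]. apply Rinv_lt_contravar; lra. }
  assert (Hxy : x - y = 6 / PI * (x * y)) by (unfold x, y; field; lra).
  assert (Hest : 4 * sin (PI / 6 + x) * sin (PI / 6 - y) <= 1).
  { apply four_sin_pi6_add_sub_le.
    - split; [unfold y; lra|]. unfold x, y. unfold Rdiv. apply Rmult_le_compat_l; [lra|].
      apply Rinv_le_contravar; lra.
    - unfold x. apply (Rmult_le_reg_r (6 * (INR n - 1))); [lra|].
      unfold Rdiv. rewrite Rmult_assoc, Rinv_l by lra. lra.
    - rewrite Hxy.
      assert (0 <= x * y) by (unfold x, y; pose proof (PI_div_bounds (INR n - 1)); nra).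
      assert (6 / PI <= 2)
        by (apply (Rmult_le_reg_r PI); [lra|]; unfold Rdiv; rewrite Rmult_assoc, Rinv_l; lra).
      nra. }
  replace ((INR n - 1) * (PI / 3)) with (rsum (fun _ => 2 * (PI / 6 - y)) (seq 0 n))
    by (rewrite rsum_const, length_seq; unfold y; field; lra).
  apply rsum_lt; [destruct n; [lia|discriminate]|].
  intros j Hj. apply in_seq in Hj. destruct (Hth j ltac:(lia)) as [Hpi Hcos].
  pose proof (Rabs_pos (th j)).
  apply (turn_gt_of_cos_le (r - 1) x); unfold y in *; lra.
Qed.

Lemma wheel_no_flow_below_1_3_mod6 n r : (3 <= n)%nat ->
  Nat.modulo n 6 = 1%nat \/ Nat.modulo n 6 = 3%nat -> 2 <= r ->
  r < 1 + 2 * sin (PI / 6 + PI / (6 * (INR n - 1))) -> ~ has_complex_nz_flow (wheel n) r.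
Proof.
  intros Hn Hmod Hr Hlt Hflow. pose proof (Nat.div_mod_eq n 6). pose proof PI_bounds.
  assert (Hn3 : 3 <= INR n) by (replace 3 with (INR 3) by (simpl; ring); apply le_INR; lia).
  pose proof (PI_div_bounds (INR n - 1) ltac:(lra)).
  assert (Hodd : Nat.odd n = true)
    by (destruct Hmod as [Hm|Hm]; [apply (odd_of_mod6 n 1)|apply (odd_of_mod6 n 3)]; auto).
  destruct (wheel_flow_turns n r (PI / (6 * (INR n - 1))) Hn Hodd) as [th [K [Hsum [HK Hth]]]];
    try lra; [|exact Hflow|].
  - replace (2 * (PI / (6 * (INR n - 1))) * (INR n - 1)) with (PI / 3) by (field; lra). lra.
  - replace (2 * (PI / (6 * (INR n - 1))) * INR n) with (INR n / (INR n - 1) * (PI / 3)) in HK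
      by (field; lra).
    apply turn_count_bound in HK.
    assert (Hlt2 : INR n / (INR n - 1) < IZR 2).
    { apply (Rmult_lt_reg_r (INR n - 1)); [lra|]. unfold Rdiv.
      rewrite Rmult_assoc, Rinv_l by lra. simpl. lra. }
    pose proof (Zabs_lt_of_Rabs _ 2 (Rlt_trans _ _ _ HK Hlt2)) as HD.
    assert (HK6 : (6 * K = Z.of_nat n - 1)%Z /\ (7 <= n)%nat) by lia.
    destruct HK6 as [HK6 Hn7].
    pose proof (wheel_turn_sum_gt n r th Hn7 Hr Hlt Hth) as Hgt.
    assert (H6K : 6 * IZR K = INR n - 1)
      by (rewrite <- mult_IZR, HK6, minus_IZR, <- INR_IZR_INZ; reflexivity).
    rewrite Hsum in Hgt. replace (2 * IZR K * PI) with (6 * IZR K * (PI / 3)) in Hgt by field.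
    rewrite H6K in Hgt. lra.
Qed.

Theorem theorem1 (n : nat) (hn : (3 <= n)%nat) :
  (Nat.even n = true -> is_complex_flow_number (wheel n) 2) /\
  (Nat.modulo n 6 = 1%nat \/ Nat.modulo n 6 = 3%nat ->
     is_complex_flow_number (wheel n)
       (1 + 2 * sin (PI / 6 * (INR n / INR (n - 1))))) /\
  (Nat.modulo n 6 = 5%nat ->
     is_complex_flow_number (wheel n)
       (1 + 2 * sin (PI / 6 * (INR (n + 1) / INR n)))).
Proof.
  assert (Hn : 3 <= INR n) by (replace 3 with (INR 3) by (simpl; ring); apply le_INR; lia).
  pose proof PI_RGT_0.
  split; [|split].
  - intros Heven. apply is_complex_flow_number_intro; [lra | apply wheel_flow_even; auto; lia |].
    intros r Hr. lra.
  - intros Hmod.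
    replace (PI / 6 * (INR n / INR (n - 1))) with (PI / 6 + PI / (6 * (INR n - 1)))
      by (rewrite minus_INR by lia; simpl; field; lra).
    pose proof (PI_div_bounds (INR n - 1) ltac:(lra)).
    apply is_complex_flow_number_intro.
    + pose proof (two_sin_ge_1 (PI / 6 + PI / (6 * (INR n - 1))) ltac:(lra)). lra.
    + destruct Hmod; [apply wheel_flow_1_mod6 | apply wheel_flow_3_mod6]; assumption.
    + intros r [Hr Hlt]. apply wheel_no_flow_below_1_3_mod6; assumption.
  - intros Hmod.
    replace (PI / 6 * (INR (n + 1) / INR n)) with (PI / 6 + PI / (6 * INR n))
      by (rewrite plus_INR; simpl; field; lra).
    pose proof (PI_div_bounds (INR n) ltac:(lra)).
    apply is_complex_flow_number_intro.
    + pose proof (two_sin_ge_1 (PI / 6 + PI / (6 * INR n)) ltac:(lra)). lra.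
    + apply wheel_flow_5_mod6, Hmod.
    + intros r [Hr Hlt]. apply wheel_no_flow_below_5_mod6; assumption.
Qed.
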